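(* Let $G$ be a connected graph with root $x_0$, let $\lambda,k\ge1$ and $N\in\mathbb N$. Then taking the $(N,1)$-skeleton of the skeleton $G_{\lambda,k}$ (rooted at the block of $x_0$) yields the skeleton $G_{N\lambda,k}$ of $G$: that is, $G_{(\lambda,k)_{(N,1)}}=G_{N\lambda,k}$, in the sense that two vertices $x,y$ of $G$ are sent to the same vertex by the natural map $G\to G_{N\lambda,k}$ iff they are sent to the same vertex by the composite natural map $G\to G_{\lambda,k}\to G_{(\lambda,k)_{(N,1)}}$, and the edges correspond accordingly.
   Context: $d$ is the graph metric. A set $X$ of vertices is $k$-connected if any two of its points are joined by a finite sequence in $X$ with consecutive distances $\le k$. Skeleton $G_{\lambda,k}$ of a connected graph $G$ (root $x_0\in V(G)$, scale $\lambda\ge1$, connectivity $k\ge1$): layers $A_{N,\lambda}=\{x: N\lambda<d(x,x_0)\le(N+1)\lambda\}$, $N\in\mathbb Z$; blocks are the maximal $k$-connected subsets of layers (distances in $G$); $G_{\lambda,k}$ has a vertex per block and an edge between two blocks iff an edge of $G$ joins a vertex of one to a vertex of the other. The natural map sends each vertex to its block. $G_{(\lambda,k)_{(\lambda',k')}}$ denotes the $(\lambda',k')$-skeleton of the graph $G_{\lambda,k}$ (with its own graph metric), rooted at the block containing $x_0$. *)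

From Stdlib Require Import Reals ZArith.
Open Scope R_scope.

Inductive walk {V : Type} (adj : V -> V -> Prop) : V -> V -> nat -> Prop :=
| walk0 : forall x, walk adj x x 0
| walkS : forall x y z n, adj x y -> walk adj y z n -> walk adj x z (S n).

Definition is_dist {V : Type} (adj : V -> V -> Prop) (x y : V) (n : nat) : Prop :=
  walk adj x y n /\ (forall m, walk adj x y m -> (n <= m)%nat).

Definition layer {V : Type} (adj : V -> V -> Prop) (x0 : V) (lam : R) (N : Z)
  (x : V) : Prop :=
  exists n, is_dist adj x x0 n /\ IZR N * lam < INR n /\ INR n <= (IZR N + 1) * lam.

Definition close {V : Type} (adj : V -> V -> Prop) (k : R) (x y : V) : Prop :=
  exists m, walk adj x y m /\ INR m <= k.

Inductive kchain {V : Type} (adj : V -> V -> Prop) (k : R) (X : V -> Prop)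
  : V -> V -> Prop :=
| kchain0 : forall x, X x -> kchain adj k X x x
| kchainS : forall x z y, X x -> close adj k x z -> kchain adj k X z y ->
    kchain adj k X x y.

Definition kconnected {V : Type} (adj : V -> V -> Prop) (k : R) (X : V -> Prop)
  : Prop :=
  forall x y, X x -> X y -> kchain adj k X x y.

Definition is_block {V : Type} (adj : V -> V -> Prop) (x0 : V) (lam k : R)
  (B : V -> Prop) : Prop :=
  exists N : Z,
    (exists x, B x) /\
    (forall x, B x -> layer adj x0 lam N x) /\
    kconnected adj k B /\
    (forall B' : V -> Prop,
        (forall x, B x -> B' x) ->
        (forall x, B' x -> layer adj x0 lam N x) ->
        kconnected adj k B' ->
        forall x, B' x -> B x).

Definition skel_vertex {V : Type} (adj : V -> V -> Prop) (x0 : V) (lam k : R)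
  : Type := { B : V -> Prop | is_block adj x0 lam k B }.

Definition skel_adj {V : Type} (adj : V -> V -> Prop) (x0 : V) (lam k : R)
  (b b' : skel_vertex adj x0 lam k) : Prop :=
  b <> b' /\
  exists x y, proj1_sig b x /\ proj1_sig b' y /\ adj x y.

(* A vertex at distance d from x0 lies in the block of G_{lam,k} at distance
   ceil(d / lam) from the root block: a geodesic to x0 crosses the layers one at
   a time, and two adjacent vertices of one layer are in one block since k >= 1.
   So the layers of G_{lam,k} at scale N are the images of the layers of G at
   scale N lam.  Inside such a thick layer, a 1-chain of blocks gives a k-chain
   of G, as blocks are k-connected and skeleton edges come from edges of G.
   Conversely, a walk of length <= k between two points of the thick layer moves
   within it by edges of the skeleton, and whenever it leaves the thick layer it
   has to come back through the same extreme thin layer, whose two crossing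
   points are then at distance <= k, hence in one block.  Thus both maps
   G -> G_{N lam,k} and G -> G_{(lam,k)_(N,1)} have the same fibres, and as both
   skeleta carry the adjacency induced by G, they have the same edges too. *)

From Stdlib Require Import Reals ZArith Lia Lra Wf_nat Classical
  FunctionalExtensionality PropExtensionality ProofIrrelevance ClassicalEpsilon.
Open Scope R_scope.

Lemma ceil_exists (l : R) (n : nat) : 0 < l ->
  exists c : nat, (INR c - 1) * l < INR n <= INR c * l.
Proof.
  intros Hl. set (t := INR n / l).
  assert (Ht : 0 <= t) by (apply Rle_mult_inv_pos; [apply pos_INR | exact Hl]).
  assert (Hn : INR n = t * l) by (unfold t; field; lra).
  destruct (archimed (- t)) as [H1 H2].
  assert (Hup : (up (- t) <= 1)%Z) by (apply le_IZR; lra).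
  exists (Z.to_nat (1 - up (- t))).
  rewrite INR_IZR_INZ, Z2Nat.id, minus_IZR, Hn by lia.
  split; [apply Rmult_lt_compat_r | apply Rmult_le_compat_r]; lra.
Qed.

Lemma ceil_gt_iff (l t : R) (c a : Z) : 0 < l -> (IZR c - 1) * l < t <= IZR c * l ->
  (IZR a * l < t <-> (a < c)%Z).
Proof.
  intros Hl [Hlo Hhi]. split; intros H.
  - apply lt_IZR, (Rmult_lt_reg_r l); lra.
  - assert (Ha : IZR a <= IZR c - 1) by (rewrite <- minus_IZR; apply IZR_le; lia).
    apply Rle_lt_trans with ((IZR c - 1) * l); [apply Rmult_le_compat_r|]; lra.
Qed.

Lemma ceil_le_iff (l t : R) (c b : Z) : 0 < l -> (IZR c - 1) * l < t <= IZR c * l ->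
  (t <= IZR b * l <-> (c <= b)%Z).
Proof.
  intros Hl [Hlo Hhi]. split; intros H.
  - assert (Hcb : IZR (c - 1) < IZR b) by (rewrite minus_IZR; apply (Rmult_lt_reg_r l); lra).
    apply lt_IZR in Hcb. lia.
  - apply Rle_trans with (IZR c * l); [lra|].
    apply Rmult_le_compat_r; [lra | now apply IZR_le].
Qed.

Section Walks.
Context {V : Type} {adj : V -> V -> Prop}.

Lemma walk_rcons x y z n : walk adj x y n -> adj y z -> walk adj x z (S n).
Proof.
  intros W; revert z; induction W as [x|x y' y n Hxy' _ IH]; intros z Hyz.
  - apply walkS with z; [exact Hyz | constructor].
  - apply walkS with y'; auto.
Qed.

Lemma is_dist_unique x y n m : is_dist adj x y n -> is_dist adj x y m -> n = m.
Proof. intros [Wn Hn] [Wm Hm]. specialize (Hn m Wm). specialize (Hm n Wn). lia. Qed.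

Lemma connected_is_dist x0 : (forall x y, exists n, walk adj x y n) ->
  forall x, exists n, is_dist adj x x0 n.
Proof.
  intros Hconn x.
  destruct (dec_inh_nat_subset_has_unique_least_element (walk adj x x0))
    as [n [[Wn Hmin] _]]; [intros n; apply classic | apply Hconn |].
  exists n; split; assumption.
Qed.

Lemma layer_of_dist x0 l M x n : is_dist adj x x0 n ->
  (layer adj x0 l M x <-> IZR M * l < INR n <= (IZR M + 1) * l).
Proof.
  intros Hn. split.
  - intros [n' [Hn' H]]. now rewrite (is_dist_unique _ _ _ _ Hn Hn').
  - intros H. now exists n.
Qed.

Lemma adj_close k x y : 1 <= k -> adj x y -> close adj k x y.
Proof.
  intros Hk Hxy. exists 1%nat.
  split; [apply walkS with y; [exact Hxy | constructor] | simpl; lra].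
Qed.

Lemma close_1_cases x y : close adj 1 x y -> x = y \/ adj x y.
Proof.
  intros [[|[|m]] [W Hm]].
  - inversion W; auto.
  - inversion W as [|? z ? ? Hxz Wz]; subst. inversion Wz; subst; auto.
  - exfalso. rewrite !S_INR in Hm. pose proof (pos_INR m). lra.
Qed.

Lemma kchain_first k X x y : kchain adj k X x y -> X x.
Proof. now destruct 1. Qed.

Lemma kchain_last k X x y : kchain adj k X x y -> X y.
Proof. induction 1; assumption. Qed.

Lemma kchain_trans k X x y z :
  kchain adj k X x y -> kchain adj k X y z -> kchain adj k X x z.
Proof.
  induction 1 as [|x w y Hx Hxw _ IH]; intros Hyz; [exact Hyz|].
  apply kchainS with w; auto.
Qed.

Lemma kchain_weaken k (X Y : V -> Prop) x y :
  (forall z, X z -> Y z) -> kchain adj k X x y -> kchain adj k Y x y.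
Proof.
  intros HXY; induction 1 as [x Hx|x w y Hx Hxw _ IH];
    [constructor | apply kchainS with w]; auto.
Qed.

Lemma kchain_restrict k X x y :
  kchain adj k X x y -> kchain adj k (kchain adj k X x) x y.
Proof.
  induction 1 as [x Hx|x w y Hx Hxw Hwy IH].
  - now do 2 constructor.
  - apply kchainS with w; [now constructor | exact Hxw |].
    apply kchain_weaken with (kchain adj k X w); [|exact IH].
    intros v Hwv. now apply kchainS with w.
Qed.

Hypothesis adj_sym : forall x y, adj x y -> adj y x.

Lemma walk_sym x y n : walk adj x y n -> walk adj y x n.
Proof.
  induction 1 as [x|x y z n Hxy _ IH]; [constructor | apply walk_rcons with y; auto].
Qed.

Lemma close_sym k x y : close adj k x y -> close adj k y x.
Proof. intros [m [W Hm]]. exists m. split; [now apply walk_sym | exact Hm]. Qed.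

Lemma kchain_sym k X x y : kchain adj k X x y -> kchain adj k X y x.
Proof.
  induction 1 as [x Hx|x w y Hx Hxw Hwy IH]; [now constructor|].
  apply kchain_trans with w; [exact IH|].
  apply kchainS with x; [exact (kchain_first _ _ _ _ Hwy) | | now constructor].
  now apply close_sym.
Qed.

Lemma skel_adj_sym x0 lam k (b c : skel_vertex adj x0 lam k) :
  skel_adj adj x0 lam k b c -> skel_adj adj x0 lam k c b.
Proof. intros [Hne [x [y [Hx [Hy Hxy]]]]]. split; [congruence | exists y, x; auto]. Qed.

End Walks.

Definition quotient_adj {U W : Type} (adjU : U -> U -> Prop) (p : U -> W)
  (adjW : W -> W -> Prop) : Prop :=
  forall a b, adjW a b <-> a <> b /\ exists u w, p u = a /\ p w = b /\ adjU u w.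

Lemma quotient_adj_comp {U V W : Type} (adjU : U -> U -> Prop) (adjV : V -> V -> Prop)
  (adjW : W -> W -> Prop) (p : U -> V) (q : V -> W) :
  quotient_adj adjU p adjV -> quotient_adj adjV q adjW ->
  quotient_adj adjU (fun u => q (p u)) adjW.
Proof.
  intros Hp Hq a b. rewrite (Hq a b). split.
  - intros [Hab [e [e' [<- [<- Hee']]]]]. apply Hp in Hee' as [_ [u [w [<- [<- Huw]]]]].
    split; [exact Hab | now exists u, w].
  - intros [Hab [u [w [<- [<- Huw]]]]]. split; [exact Hab|].
    exists (p u), (p w). do 2 (split; [reflexivity|]).
    apply Hp. split; [congruence | now exists u, w].
Qed.

Lemma quotient_adj_same_fibres {U V W : Type} (adjU : U -> U -> Prop)
  (adjV : V -> V -> Prop) (adjW : W -> W -> Prop) (p : U -> V) (q : U -> W) :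
  quotient_adj adjU p adjV -> quotient_adj adjU q adjW ->
  (forall x y, p x = p y <-> q x = q y) ->
  forall x y, adjV (p x) (p y) <-> adjW (q x) (q y).
Proof.
  intros Hp Hq Hpq x y. rewrite (Hp (p x) (p y)), (Hq (q x) (q y)), Hpq. split.
  - intros [Hxy [u [w [Hu [Hw Huw]]]]]. split; [exact Hxy|].
    exists u, w. rewrite <- !Hpq. auto.
  - intros [Hxy [u [w [Hu [Hw Huw]]]]]. split; [exact Hxy|].
    exists u, w. rewrite !Hpq. auto.
Qed.

Section Blocks.
Context {V : Type} (adj : V -> V -> Prop) (x0 : V) (lam k : R).
Hypothesis adj_sym : forall x y, adj x y -> adj y x.
Hypothesis lam_pos : 0 < lam.

Lemma layer_unique M M' x : layer adj x0 lam M x -> layer adj x0 lam M' x -> M = M'.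
Proof.
  intros [n [Hn HM]] HM'. apply (layer_of_dist x0 lam M' x n Hn) in HM'.
  assert (HMM' : (M < M' + 1)%Z)
    by (apply lt_IZR; rewrite plus_IZR; apply (Rmult_lt_reg_r lam); lra).
  assert (HM'M : (M' < M + 1)%Z)
    by (apply lt_IZR; rewrite plus_IZR; apply (Rmult_lt_reg_r lam); lra).
  lia.
Qed.

Definition same_block (x y : V) : Prop :=
  exists M, layer adj x0 lam M x /\ kchain adj k (layer adj x0 lam M) x y.

Lemma same_block_refl M x : layer adj x0 lam M x -> same_block x x.
Proof. intros Hx. exists M. split; [exact Hx | now constructor]. Qed.

Lemma same_block_layer x y : same_block x y ->
  exists M, layer adj x0 lam M x /\ layer adj x0 lam M y.
Proof. intros [M [Hx Hxy]]. exists M. split; [exact Hx | exact (kchain_last _ _ _ _ Hxy)]. Qed.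

Lemma same_block_sym x y : same_block x y -> same_block y x.
Proof.
  intros [M [Hx Hxy]]. exists M.
  split; [exact (kchain_last _ _ _ _ Hxy) | exact (kchain_sym adj_sym _ _ _ _ Hxy)].
Qed.

Lemma same_block_trans x y z : same_block x y -> same_block y z -> same_block x z.
Proof.
  intros [M [Hx Hxy]] [M' [Hy Hyz]].
  rewrite <- (layer_unique _ _ _ (kchain_last _ _ _ _ Hxy) Hy) in Hyz.
  exists M. split; [exact Hx | exact (kchain_trans _ _ _ _ _ Hxy Hyz)].
Qed.

Lemma kchain_same_block x y : same_block x y -> kchain adj k (same_block x) x y.
Proof.
  intros [M [Hx Hxy]]. apply kchain_weaken with (kchain adj k (layer adj x0 lam M) x).
  - intros z Hz. now exists M.
  - now apply kchain_restrict.
Qed.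

Lemma block_mem_iff B p q : is_block adj x0 lam k B -> B p -> (B q <-> same_block p q).
Proof.
  intros [M [_ [Hlayer [Hconn Hmax]]]] Hp. split; intros Hq.
  - exists M. split; [now apply Hlayer|].
    apply kchain_weaken with B; [exact Hlayer | now apply Hconn].
  - set (B' := fun z => B z \/ same_block p z).
    assert (Hfrom_p : forall z, B' z -> kchain adj k B' p z).
    { intros z [Hz|Hz].
      - apply kchain_weaken with B; [now left | now apply Hconn].
      - apply kchain_weaken with (same_block p); [now right | now apply kchain_same_block]. }
    apply Hmax with B'; [now left | | | now right].
    + intros z [Hz|Hz]; [now apply Hlayer|].
      destruct (same_block_layer _ _ Hz) as [M' [Hp' Hz']].
      now rewrite (layer_unique _ _ _ (Hlayer p Hp) Hp').
    + intros y z Hy Hz. apply kchain_trans with p; [apply (kchain_sym adj_sym)|]; auto.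
Qed.

Lemma skel_vertex_eq_iff (b c : skel_vertex adj x0 lam k) x y :
  proj1_sig b x -> proj1_sig c y -> (b = c <-> same_block x y).
Proof.
  destruct b as [B HB], c as [C HC]; simpl. intros Hx Hy. split.
  - intros E. injection E as HBC. subst C. now apply (block_mem_iff B x y HB Hx).
  - intros Hxy. assert (B = C) as <-.
    { apply functional_extensionality; intros z; apply propositional_extensionality.
      rewrite (block_mem_iff B x z HB Hx), (block_mem_iff C y z HC Hy).
      split; eauto using same_block_trans, same_block_sym. }
    now rewrite (proof_irrelevance _ HB HC).
Qed.

Lemma skel_vertex_inhabited (b : skel_vertex adj x0 lam k) : exists x, proj1_sig b x.
Proof. destruct b as [B HB]; simpl. destruct HB as [M [HB _]]. exact HB. Qed.

Hypothesis dist_root : forall x, exists n, is_dist adj x x0 n.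

Lemma layer_exists x : exists M, layer adj x0 lam M x.
Proof.
  destruct (dist_root x) as [n Hn]. destruct (ceil_exists lam n lam_pos) as [c Hc].
  exists (Z.of_nat c - 1)%Z. apply (layer_of_dist x0 lam _ x n Hn).
  rewrite minus_IZR, <- INR_IZR_INZ. replace (INR c - 1 + 1) with (INR c) by ring. exact Hc.
Qed.

Lemma same_block_is_block x : is_block adj x0 lam k (same_block x).
Proof.
  destruct (layer_exists x) as [M Hx]. exists M. split; [|split; [|split]].
  - exists x. now apply same_block_refl with M.
  - intros y Hxy. destruct (same_block_layer _ _ Hxy) as [M' [Hx' Hy]].
    now rewrite (layer_unique _ _ _ Hx Hx').
  - intros y z Hxy Hxz. apply kchain_trans with x.
    + apply (kchain_sym adj_sym). now apply kchain_same_block.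
    + now apply kchain_same_block.
  - intros B' HB' HB'layer HB'conn y Hy. exists M. split; [exact Hx|].
    apply kchain_weaken with B'; [exact HB'layer|].
    apply HB'conn; [apply HB'; now apply same_block_refl with M | exact Hy].
Qed.

Definition block_of (x : V) : skel_vertex adj x0 lam k :=
  exist _ (same_block x) (same_block_is_block x).

Lemma block_of_mem x : proj1_sig (block_of x) x.
Proof. destruct (layer_exists x) as [M Hx]. now apply same_block_refl with M. Qed.

Lemma block_of_unique (b : skel_vertex adj x0 lam k) x : proj1_sig b x -> b = block_of x.
Proof. intros Hx. apply (skel_vertex_eq_iff b _ x x Hx (block_of_mem x)), block_of_mem. Qed.

Lemma block_of_eq_iff x y : block_of x = block_of y <-> same_block x y.
Proof. apply skel_vertex_eq_iff; apply block_of_mem. Qed.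

Lemma common_block_iff x y :
  (exists B, is_block adj x0 lam k B /\ B x /\ B y) <-> block_of x = block_of y.
Proof.
  rewrite block_of_eq_iff. split.
  - intros [B [HB [Hx Hy]]]. now apply (block_mem_iff B x y HB Hx).
  - intros Hxy. exists (same_block x).
    split; [apply same_block_is_block | split; [apply block_of_mem | exact Hxy]].
Qed.

Lemma skel_adj_quotient : quotient_adj adj block_of (skel_adj adj x0 lam k).
Proof.
  intros a b. split.
  - intros [Hne [x [y [Hx [Hy Hxy]]]]]. split; [exact Hne|].
    exists x, y. now rewrite (block_of_unique a x Hx), (block_of_unique b y Hy).
  - intros [Hne [u [w [<- [<- Huw]]]]]. split; [exact Hne|].
    exists u, w. auto using block_of_mem.
Qed.

Lemma skel_adj_block_of x y :
  block_of x <> block_of y -> adj x y -> skel_adj adj x0 lam k (block_of x) (block_of y).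
Proof. intros Hne Hxy. apply skel_adj_quotient. split; [exact Hne | now exists x, y]. Qed.

End Blocks.

Section Composite.
Context {V : Type} (adj : V -> V -> Prop) (x0 : V) (lam k : R) (N : nat).
Hypothesis adj_sym : forall x y, adj x y -> adj y x.
Hypothesis dist_root : forall x, exists n, is_dist adj x x0 n.
Hypothesis lam_ge1 : 1 <= lam.
Hypothesis k_ge1 : 1 <= k.
Hypothesis N_ge1 : (1 <= N)%nat.
Variable b0 : skel_vertex adj x0 lam k.
Hypothesis b0_root : proj1_sig b0 x0.

Lemma lam_pos : 0 < lam.
Proof. lra. Qed.

Definition depth (x : V) : nat :=
  proj1_sig (constructive_indefinite_description _ (dist_root x)).

Lemma depth_spec x : is_dist adj x x0 (depth x).
Proof. unfold depth. now destruct constructive_indefinite_description. Qed.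

Lemma depth_adj x y : adj x y -> (depth x <= depth y + 1)%nat.
Proof.
  intros Hxy. destruct (depth_spec x) as [_ Hmin]. rewrite Nat.add_comm.
  apply Hmin, walkS with y; [exact Hxy | apply depth_spec].
Qed.

Lemma depth_root x : depth x = 0%nat -> x = x0.
Proof. intros H. destruct (depth_spec x) as [W _]. rewrite H in W. now inversion W. Qed.

Definition level (x : V) : nat :=
  proj1_sig (constructive_indefinite_description _ (ceil_exists lam (depth x) lam_pos)).

Local Notation lv x := (Z.of_nat (level x)).

Lemma level_spec x : (IZR (lv x) - 1) * lam < INR (depth x) <= IZR (lv x) * lam.
Proof.
  rewrite <- INR_IZR_INZ. unfold level. now destruct constructive_indefinite_description.
Qed.

Lemma lt_depth_iff a x : IZR a * lam < INR (depth x) <-> (a < lv x)%Z.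
Proof. exact (ceil_gt_iff _ _ _ a lam_pos (level_spec x)). Qed.

Lemma depth_le_iff b x : INR (depth x) <= IZR b * lam <-> (lv x <= b)%Z.
Proof. exact (ceil_le_iff _ _ _ b lam_pos (level_spec x)). Qed.

Lemma layer_level M x : layer adj x0 lam M x <-> lv x = (M + 1)%Z.
Proof.
  rewrite (layer_of_dist x0 lam M x _ (depth_spec x)), <- plus_IZR.
  rewrite lt_depth_iff, depth_le_iff. lia.
Qed.

Lemma level_le x y m :
  INR (depth x) <= INR (depth y) + INR m * lam -> (level x <= level y + m)%nat.
Proof.
  intros H. pose proof (level_spec y) as [_ Hy].
  assert (Hx : INR (depth x) <= IZR (Z.of_nat (level y + m)) * lam).
  { rewrite <- INR_IZR_INZ in *. rewrite plus_INR. lra. }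
  apply depth_le_iff in Hx. lia.
Qed.

Lemma level_adj x y : adj x y -> (level x <= level y + 1)%nat.
Proof.
  intros Hxy. apply level_le.
  pose proof (le_INR _ _ (depth_adj x y Hxy)) as H. rewrite plus_INR in H. simpl in *. lra.
Qed.

Lemma level_mono x y : (depth x <= depth y)%nat -> (level x <= level y)%nat.
Proof.
  intros H. rewrite <- (Nat.add_0_r (level y)). apply level_le.
  apply le_INR in H. simpl. lra.
Qed.

Lemma level_root : level x0 = 0%nat.
Proof.
  assert (Hd : depth x0 = 0%nat).
  { destruct (depth_spec x0) as [_ Hmin]. specialize (Hmin 0%nat (walk0 _ _)). lia. }
  assert (H1 : (-1 < lv x0)%Z) by (apply lt_depth_iff; rewrite Hd; simpl; lra).
  assert (H2 : (lv x0 <= 0)%Z) by (apply depth_le_iff; rewrite Hd; simpl; lra).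
  lia.
Qed.

Local Notation blk := (block_of adj x0 lam k adj_sym lam_pos dist_root).
Local Notation blk_unique := (block_of_unique adj x0 lam k adj_sym lam_pos dist_root).
Local Notation sadj := (skel_adj adj x0 lam k).

Lemma same_block_level x y : same_block adj x0 lam k x y -> level x = level y.
Proof.
  intros Hxy. destruct (same_block_layer adj x0 lam k x y Hxy) as [M [Hx Hy]].
  apply layer_level in Hx, Hy. lia.
Qed.

Lemma mem_level (b : skel_vertex adj x0 lam k) x y :
  proj1_sig b x -> proj1_sig b y -> level x = level y.
Proof.
  intros Hx Hy. rewrite (blk_unique b x Hx) in Hy. now apply same_block_level.
Qed.

Lemma blk_eq_of_close x y : level x = level y -> close adj k x y -> blk x = blk y.
Proof.
  intros Hl Hxy. apply block_of_eq_iff.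
  assert (Hx : layer adj x0 lam (lv x - 1) x) by (apply layer_level; lia).
  assert (Hy : layer adj x0 lam (lv x - 1) y) by (apply layer_level; lia).
  exists (lv x - 1)%Z. split; [exact Hx|].
  apply kchainS with y; [exact Hx | exact Hxy | now constructor].
Qed.

Lemma sadj_level (b c : skel_vertex adj x0 lam k) x y :
  sadj b c -> proj1_sig b x -> proj1_sig c y -> (level x <= level y + 1)%nat.
Proof.
  intros [_ [u [w [Hu [Hw Huw]]]]] Hx Hy.
  rewrite (mem_level b x u Hx Hu), (mem_level c y w Hy Hw). now apply level_adj.
Qed.

Lemma walk_to_root n x : depth x = n -> walk sadj (blk x) b0 (level x).
Proof.
  revert x; induction n as [|n IH]; intros x Hx.
  - apply depth_root in Hx as ->. rewrite level_root, (blk_unique b0 x0 b0_root).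
    constructor.
  - destruct (depth_spec x) as [W _]. rewrite Hx in W.
    inversion W as [|? y ? ? Hxy Wy]; subst.
    assert (Hy : depth y = n).
    { destruct (depth_spec y) as [_ Hmin]. specialize (Hmin n Wy).
      pose proof (depth_adj x y Hxy). lia. }
    pose proof (level_adj x y Hxy) as Hup.
    pose proof (level_mono y x ltac:(lia)) as Hdown.
    destruct (Nat.eq_dec (level x) (level y)) as [E|E].
    + rewrite (blk_eq_of_close x y E (adj_close k x y k_ge1 Hxy)), E. now apply IH.
    + replace (level x) with (S (level y)) by lia.
      apply walkS with (blk y); [|now apply IH].
      apply skel_adj_block_of; [|exact Hxy].
      intros Hxy'. apply block_of_eq_iff, same_block_level in Hxy'. contradiction.
Qed.

Lemma skel_walk_level (b c : skel_vertex adj x0 lam k) m : walk sadj b c m ->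
  forall x y, proj1_sig b x -> proj1_sig c y -> (level x <= level y + m)%nat.
Proof.
  induction 1 as [b|b d c m Hbd _ IH]; intros x y Hx Hy.
  - rewrite (mem_level b x y Hx Hy). lia.
  - destruct (skel_vertex_inhabited adj x0 lam k d) as [u Hu].
    pose proof (sadj_level b d x u Hbd Hx Hu). pose proof (IH u y Hu Hy). lia.
Qed.

Lemma skel_depth x : is_dist sadj (blk x) b0 (level x).
Proof.
  split; [now apply walk_to_root with (depth x)|].
  intros m W.
  pose proof (skel_walk_level _ _ m W x x0 (block_of_mem _ _ _ _ _ _ _ x) b0_root) as Hle.
  rewrite level_root in Hle. lia.
Qed.

Lemma skel_dist_root (b : skel_vertex adj x0 lam k) : exists n, is_dist sadj b b0 n.
Proof.
  destruct (skel_vertex_inhabited adj x0 lam k b) as [x Hx].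
  exists (level x). rewrite (blk_unique b x Hx). apply skel_depth.
Qed.

Lemma N_pos : 0 < INR N.
Proof. apply lt_0_INR. lia. Qed.

Lemma big_pos : 0 < INR N * lam.
Proof. pose proof N_pos. pose proof lam_pos. nra. Qed.

Local Notation big_blk := (block_of adj x0 (INR N * lam) k adj_sym big_pos dist_root).
Local Notation big_blk_unique :=
  (block_of_unique adj x0 (INR N * lam) k adj_sym big_pos dist_root).
Local Notation coarse_blk :=
  (block_of sadj b0 (INR N) 1 (skel_adj_sym adj_sym x0 lam k) N_pos skel_dist_root).
Local Notation coarse_blk_unique :=
  (block_of_unique sadj b0 (INR N) 1 (skel_adj_sym adj_sym x0 lam k) N_pos skel_dist_root).

Definition band (Q : Z) (x : V) : Prop :=
  (Q * Z.of_nat N < lv x <= Q * Z.of_nat N + Z.of_nat N)%Z.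

Lemma big_layer_band Q x : layer adj x0 (INR N * lam) Q x <-> band Q x.
Proof.
  rewrite (layer_of_dist x0 _ Q x _ (depth_spec x)).
  replace (IZR Q * (INR N * lam)) with (IZR (Q * Z.of_nat N) * lam)
    by (rewrite mult_IZR, INR_IZR_INZ; ring).
  replace ((IZR Q + 1) * (INR N * lam)) with (IZR (Q * Z.of_nat N + Z.of_nat N) * lam)
    by (rewrite plus_IZR, mult_IZR, INR_IZR_INZ; ring).
  now rewrite lt_depth_iff, depth_le_iff.
Qed.

Lemma skel_layer_band Q x : layer sadj b0 (INR N) Q (blk x) <-> band Q x.
Proof.
  rewrite (layer_of_dist b0 _ Q _ _ (skel_depth x)).
  rewrite !INR_IZR_INZ, <- plus_IZR, <- !mult_IZR.
  unfold band. split.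
  - intros [H1 H2]. apply lt_IZR in H1. apply le_IZR in H2. lia.
  - intros H. split; [apply IZR_lt | apply IZR_le]; lia.
Qed.

Definition linked (Q : Z) (x y : V) : Prop :=
  kchain sadj 1 (layer sadj b0 (INR N) Q) (blk x) (blk y).

Lemma linked_eq Q x y : band Q x -> blk x = blk y -> linked Q x y.
Proof. intros Hx E. unfold linked. rewrite <- E. constructor. now apply skel_layer_band. Qed.

Lemma linked_trans Q x y z : linked Q x y -> linked Q y z -> linked Q x z.
Proof. apply kchain_trans. Qed.

Lemma linked_adj Q x y : band Q x -> band Q y -> adj x y -> linked Q x y.
Proof.
  intros Hx Hy Hxy. destruct (classic (blk x = blk y)) as [E|Hne]; [now apply linked_eq|].
  apply kchainS with (blk y); [now apply skel_layer_band | |].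
  - apply adj_close; [lra | now apply skel_adj_block_of].
  - constructor. now apply skel_layer_band.
Qed.

Section Excursion.
Variable Q : Z.

(* [u] is off the band [Q] on one side, and [a], the last vertex of the walk
   inside the band, lies in the thin layer of the band on that side. *)
Definition outside (a u : V) : Prop :=
  (lv u <= Q * Z.of_nat N /\ lv a = Q * Z.of_nat N + 1)%Z \/
  (Q * Z.of_nat N + Z.of_nat N < lv u /\ lv a = Q * Z.of_nat N + Z.of_nat N)%Z.

Lemma outside_not_band a u : outside a u -> ~ band Q u.
Proof. unfold outside, band. lia. Qed.

Lemma outside_exit u v : band Q u -> adj u v -> ~ band Q v -> outside u v.
Proof.
  intros Hu Huv Hv.
  pose proof (level_adj u v Huv). pose proof (level_adj v u (adj_sym _ _ Huv)).
  unfold outside, band in *. lia.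
Qed.

Lemma outside_step a u v : outside a u -> adj u v -> ~ band Q v -> outside a v.
Proof.
  intros Hau Huv Hv.
  pose proof (level_adj u v Huv). pose proof (level_adj v u (adj_sym _ _ Huv)).
  unfold outside, band in *. lia.
Qed.

Lemma outside_reentry a u v j : outside a u -> adj u v -> band Q v ->
  walk adj a v j -> INR j <= k -> linked Q a v.
Proof.
  intros Hau Huv Hv Wav Hj.
  pose proof (level_adj u v Huv). pose proof (level_adj v u (adj_sym _ _ Huv)).
  apply linked_eq; [unfold outside, band in *; lia|].
  apply blk_eq_of_close; [unfold outside, band in *; lia | now exists j].
Qed.

Lemma excursion u z m : walk adj u z m -> band Q z ->
  forall a j, walk adj a u j -> INR (j + m) <= k ->
  (u = a /\ band Q a) \/ outside a u -> linked Q a z.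
Proof.
  induction 1 as [u|u v z m Huv _ IH]; intros Hz a j Wau Hk Hstate.
  - destruct Hstate as [[-> _]|Hout]; [now apply linked_eq|].
    now apply outside_not_band in Hout.
  - assert (Wav : walk adj a v (S j)) by now apply walk_rcons with u.
    assert (Hk' : INR (S j + m) <= k)
      by now replace (S j + m)%nat with (j + S m)%nat by lia.
    destruct (classic (band Q v)) as [Hv|Hv].
    + apply linked_trans with v.
      * destruct Hstate as [[-> Ha]|Hout]; [now apply linked_adj|].
        apply outside_reentry with u (S j); try assumption.
        apply Rle_trans with (INR (S j + m)); [apply le_INR; lia | exact Hk'].
      * apply IH with 0%nat; [exact Hz | constructor | | now left].
        apply Rle_trans with (INR (j + S m)); [apply le_INR; lia | exact Hk].
    + apply IH with (S j); [exact Hz | exact Wav | exact Hk' | right].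
      destruct Hstate as [[-> Ha]|Hout];
        [now apply outside_exit | now apply outside_step with u].
Qed.

Lemma close_linked x z : band Q x -> band Q z -> close adj k x z -> linked Q x z.
Proof.
  intros Hx Hz [m [W Hm]].
  apply (excursion x z m W Hz x 0); [constructor | exact Hm | now left].
Qed.

End Excursion.

Lemma linked_of_big_kchain Q x y :
  kchain adj k (layer adj x0 (INR N * lam) Q) x y -> linked Q x y.
Proof.
  induction 1 as [x Hx|x w y Hx Hxw Hwy IH].
  - apply linked_eq; [now apply big_layer_band | reflexivity].
  - apply linked_trans with w; [|exact IH].
    apply close_linked; [| apply big_layer_band, (kchain_first _ _ _ _ Hwy) | exact Hxw].
    now apply big_layer_band.
Qed.

Lemma same_block_big_kchain Q x y : same_block adj x0 lam k x y -> band Q x ->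
  kchain adj k (layer adj x0 (INR N * lam) Q) x y.
Proof.
  intros [M [Hx Hxy]] HQ. apply kchain_weaken with (layer adj x0 lam M); [|exact Hxy].
  intros z Hz. apply big_layer_band. apply layer_level in Hx, Hz. unfold band in *. lia.
Qed.

Lemma big_kchain_of_skel_kchain Q (b c : skel_vertex adj x0 lam k) :
  kchain sadj 1 (layer sadj b0 (INR N) Q) b c ->
  forall x y, proj1_sig b x -> proj1_sig c y ->
  kchain adj k (layer adj x0 (INR N * lam) Q) x y.
Proof.
  induction 1 as [b Hb|b d c Hb Hbd _ IH]; intros x y Hx Hy.
  - rewrite (blk_unique b x Hx) in Hb, Hy.
    apply same_block_big_kchain; [exact Hy | now apply skel_layer_band].
  - rewrite (blk_unique b x Hx) in Hb. apply skel_layer_band in Hb.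
    destruct (close_1_cases _ _ Hbd) as [<-|[_ [u [w [Hu [Hw Huw]]]]]]; [now apply IH|].
    rewrite (blk_unique b x Hx) in Hu.
    pose proof (same_block_big_kchain Q x u Hu Hb) as Hxu.
    apply kchain_trans with u; [exact Hxu|].
    apply kchainS with w; [exact (kchain_last _ _ _ _ Hxu) | | now apply IH].
    now apply adj_close.
Qed.

Lemma same_big_block_iff x y :
  same_block adj x0 (INR N * lam) k x y <-> same_block sadj b0 (INR N) 1 (blk x) (blk y).
Proof.
  split; intros [Q [Hx Hxy]]; exists Q.
  - split; [now apply skel_layer_band, big_layer_band | now apply linked_of_big_kchain].
  - split; [now apply big_layer_band, skel_layer_band|].
    apply (big_kchain_of_skel_kchain Q _ _ Hxy); apply block_of_mem.
Qed.

Lemma coarse_blk_eq_iff x y :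
  coarse_blk (blk x) = coarse_blk (blk y) <-> big_blk x = big_blk y.
Proof. rewrite !block_of_eq_iff. symmetry. apply same_big_block_iff. Qed.

Lemma common_big_block_iff x y :
  (exists B, is_block adj x0 (INR N * lam) k B /\ B x /\ B y) <->
  (exists (b1 b2 : skel_vertex adj x0 lam k) C,
     is_block sadj b0 (INR N) 1 C /\ proj1_sig b1 x /\ proj1_sig b2 y /\ C b1 /\ C b2).
Proof.
  transitivity (big_blk x = big_blk y); [apply common_block_iff|].
  rewrite <- coarse_blk_eq_iff, <- common_block_iff. split.
  - intros [C [HC [Hx Hy]]]. exists (blk x), (blk y), C.
    split; [exact HC|]. do 2 (split; [apply block_of_mem|]). now split.
  - intros [b1 [b2 [C [HC [Hx [Hy [H1 H2]]]]]]].
    rewrite (blk_unique b1 x Hx) in H1. rewrite (blk_unique b2 y Hy) in H2.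
    now exists C.
Qed.

Lemma adjacent_big_blocks_iff x y :
  (exists B B' : skel_vertex adj x0 (INR N * lam) k,
     proj1_sig B x /\ proj1_sig B' y /\ skel_adj adj x0 (INR N * lam) k B B') <->
  (exists (b1 b2 : skel_vertex adj x0 lam k) (c1 c2 : skel_vertex sadj b0 (INR N) 1),
     proj1_sig b1 x /\ proj1_sig b2 y /\ proj1_sig c1 b1 /\ proj1_sig c2 b2 /\
     skel_adj sadj b0 (INR N) 1 c1 c2).
Proof.
  transitivity (skel_adj adj x0 (INR N * lam) k (big_blk x) (big_blk y)).
  { split.
    - intros [B [B' [Hx [Hy HBB']]]].
      now rewrite <- (big_blk_unique B x Hx), <- (big_blk_unique B' y Hy).
    - intros H. exists (big_blk x), (big_blk y).
      split; [apply block_of_mem | split; [apply block_of_mem | exact H]]. }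
  transitivity (skel_adj sadj b0 (INR N) 1 (coarse_blk (blk x)) (coarse_blk (blk y))).
  { symmetry.
    apply (quotient_adj_same_fibres adj _ _ (fun x => coarse_blk (blk x)) big_blk).
    - apply quotient_adj_comp with sadj; apply skel_adj_quotient.
    - apply skel_adj_quotient.
    - apply coarse_blk_eq_iff. }
  split.
  - intros H. exists (blk x), (blk y), (coarse_blk (blk x)), (coarse_blk (blk y)).
    do 4 (split; [apply block_of_mem|]). exact H.
  - intros [b1 [b2 [c1 [c2 [Hx [Hy [H1 [H2 Hc]]]]]]]].
    rewrite (blk_unique b1 x Hx) in H1. rewrite (blk_unique b2 y Hy) in H2.
    now rewrite (coarse_blk_unique c1 _ H1), (coarse_blk_unique c2 _ H2) in Hc.
Qed.

End Composite.

Theorem proposition1 (V : Type) (adj : V -> V -> Prop) (x0 : V) (lam k : R)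
  (N : nat) :
  (forall x y, adj x y -> adj y x) ->
  (forall x, ~ adj x x) ->
  (forall x y, exists n, walk adj x y n) ->
  1 <= lam -> 1 <= k -> (1 <= N)%nat ->
  forall b0 : skel_vertex adj x0 lam k, proj1_sig b0 x0 ->
  (forall x y : V,
     (exists B, is_block adj x0 (INR N * lam) k B /\ B x /\ B y) <->
     (exists (b1 b2 : skel_vertex adj x0 lam k) C,
        is_block (skel_adj adj x0 lam k) b0 (INR N) 1 C /\
        proj1_sig b1 x /\ proj1_sig b2 y /\ C b1 /\ C b2)) /\
  (forall x y : V,
     (exists B B' : skel_vertex adj x0 (INR N * lam) k,
        proj1_sig B x /\ proj1_sig B' y /\ skel_adj adj x0 (INR N * lam) k B B') <->
     (exists (b1 b2 : skel_vertex adj x0 lam k)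
             (c1 c2 : skel_vertex (skel_adj adj x0 lam k) b0 (INR N) 1),
        proj1_sig b1 x /\ proj1_sig b2 y /\
        proj1_sig c1 b1 /\ proj1_sig c2 b2 /\
        skel_adj (skel_adj adj x0 lam k) b0 (INR N) 1 c1 c2)).
Proof.
  intros adj_sym _ conn lam_ge1 k_ge1 N_ge1 b0 b0_root.
  pose proof (connected_is_dist x0 conn) as dist_root.
  split; intros x y; [apply common_big_block_iff | apply adjacent_big_blocks_iff];
    assumption.
Qed.
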